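(* There is a uniform algorithm that, on input of a countably generated recursive presentation $P = \langle X \mid R\rangle$ and a recursively enumerable set of integers $A$, outputs a countably generated recursive presentation $P^{A-\mathrm{tf}} = \langle X \mid R'\rangle$ on the same generating set $X$, with $R \subseteq R'$ as sets, such that $\overline{P^{A-\mathrm{tf}}} \cong \overline{P}^{A-\mathrm{tf}}$, the associated surjection $\overline{P} \to \overline{P^{A-\mathrm{tf}}}$ being the one induced by the identity map on $X$.
   Context: A countably generated recursive presentation $\langle X \mid R\rangle$ is a group presentation where $X$ is a recursively enumerated set of generators and $R$ is a recursive enumeration of relators; $\overline{P}$ denotes the group presented by $P$. For a group $G$ and set of integers $A$, $\mathrm{Tor}^{A}(G) := \{ g \in G \mid \exists n \in A,\ g^{n} = e\}$, and $G$ is $A$-torsion-free if $\mathrm{Tor}^{A}(G)=\{e\}$. $G^{A-\mathrm{tf}}$ denotes the universal $A$-torsion-free quotient of $G$: an $A$-torsion-free group $H$ with a surjection $h: G \to H$ such that every homomorphism $f$ from $G$ to an $A$-torsion-free group $K$ factors as $f = \phi\circ h$ for some homomorphism $\phi: H\to K$ (unique up to isomorphism). *)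

From HB Require Import structures.
From mathcomp Require Import all_boot all_algebra.
Set Implicit Arguments. Unset Strict Implicit. Unset Printing Implicit Defensive.

(*    (Kleene's mu-recursive functions; oracle j is the unary function     *)
(*    o j : nat -> nat.)  Data are coded into nat via MathComp's pickle.   *)

Inductive prog : Type :=
| PZero
| PSucc
| PProj (i : nat)
| POracle (j : nat)
| PComp (f : prog) (gs : seq prog)
| PRec (f g : prog)
| PMu (f : prog).

Inductive peval (o : nat -> nat -> nat) : prog -> seq nat -> nat -> Prop :=
| ev_zero a : peval o PZero a 0
| ev_succ a : peval o PSucc a (nth 0 a 0).+1
| ev_proj i a : peval o (PProj i) a (nth 0 a i)
| ev_oracle j a : peval o (POracle j) a (o j (nth 0 a 0))
| ev_comp f gs a ys y :
    pevals o gs a ys -> peval o f ys y -> peval o (PComp f gs) a y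
| ev_rec0 f g a y : peval o f a y -> peval o (PRec f g) (0 :: a) y
| ev_recS f g k a z y :
    peval o (PRec f g) (k :: a) z -> peval o g (k :: z :: a) y ->
    peval o (PRec f g) (k.+1 :: a) y
| ev_mu f a y :
    peval o f (y :: a) 0 ->
    (forall k, k < y -> exists2 v, 0 < v & peval o f (k :: a) v) ->
    peval o (PMu f) a y
with pevals (o : nat -> nat -> nat) : seq prog -> seq nat -> seq nat -> Prop :=
| evs_nil a : pevals o [::] a [::]
| evs_cons g gs a y ys :
    peval o g a y -> pevals o gs a ys -> pevals o (g :: gs) a (y :: ys).

Definition no_oracle : nat -> nat -> nat := fun _ _ => 0.

Definition computable (f : nat -> nat) : Prop :=
  exists p : prog, forall n, peval no_oracle p [:: n] (f n).

(* set enumerated by a (possibly finite / empty) enumeration *)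
Definition enum_set (T : Type) (e : nat -> option T) : T -> Prop :=
  fun x => exists n, e n = Some x.

(* letter (x, false) = generator x, (x, true) = x^-1 *)
Definition letter := (nat * bool)%type.
Definition word := seq letter.

Definition winv (w : word) : word := rev (map (fun l : letter => (l.1, ~~ l.2)) w).

Definition onX (X : nat -> Prop) (w : word) : Prop := forall l, l \in w -> X l.1.

(* the congruence "equal in <gens | R>": free reduction + normal closure of R *)
Inductive wcong (R : word -> Prop) : word -> word -> Prop :=
| wc_refl w : wcong R w w
| wc_sym u v : wcong R u v -> wcong R v u
| wc_trans u v w : wcong R u v -> wcong R v w -> wcong R u w
| wc_cat u u' v v' : wcong R u u' -> wcong R v v' -> wcong R (u ++ v) (u' ++ v')
| wc_free x b : wcong R [:: (x, b); (x, ~~ b)] [::]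
| wc_rel r : R r -> wcong R r [::].

(* groups, presented as setoids (carrier + equality of group elements) *)
Record sgroup := SGroup {
  gcar :> Type;
  geq : gcar -> gcar -> Prop;
  gmul : gcar -> gcar -> gcar;
  ginv : gcar -> gcar;
  gone : gcar;
  geq_refl : forall x, geq x x;
  geq_sym : forall x y, geq x y -> geq y x;
  geq_trans : forall x y z, geq x y -> geq y z -> geq x z;
  gmul_compat : forall x x' y y', geq x x' -> geq y y' -> geq (gmul x y) (gmul x' y');
  ginv_compat : forall x x', geq x x' -> geq (ginv x) (ginv x');
  gmulA : forall x y z, geq (gmul x (gmul y z)) (gmul (gmul x y) z);
  gmul1g : forall x, geq (gmul gone x) x;
  gmulVg : forall x, geq (gmul (ginv x) x) gone
}.

Arguments geq {s}.
Arguments gmul {s}.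
Arguments ginv {s}.
Arguments gone {s}.

Section PresGroup.
Variables (X : nat -> Prop) (R : word -> Prop).

Lemma onX_cat u v : onX X u -> onX X v -> onX X (u ++ v).
Proof. by move=> hu hv l; rewrite mem_cat => /orP [] ?; [apply: hu | apply: hv]. Qed.

Lemma onX_winv u : onX X u -> onX X (winv u).
Proof.
move=> hu l; rewrite /winv mem_rev => /mapP [l' Hl' ->] /=; exact: hu.
Qed.

Lemma onX_nil : onX X [::].
Proof. by []. Qed.

Lemma winv_cat u v : winv (u ++ v) = winv v ++ winv u.
Proof. by rewrite /winv map_cat rev_cat. Qed.

Lemma winv_cancel w : wcong R (winv w ++ w) [::].
Proof.
elim: w => [|[x b] w IH]; first exact: wc_refl.
have -> : winv ((x, b) :: w) ++ (x, b) :: w =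
          winv w ++ ([:: (x, ~~ b); (x, ~~ ~~ b)] ++ w).
  by rewrite -cat1s winv_cat /winv /= -catA /= negbK.
apply: wc_trans IH.
have := @wc_cat R (winv w) (winv w) ([:: (x, ~~ b); (x, ~~ ~~ b)] ++ w) ([::] ++ w)
  (wc_refl R _) (wc_cat (wc_free R x (~~ b)) (wc_refl R w)).
by rewrite cat0s.
Qed.

Lemma wcong_winv u v : wcong R u v -> wcong R (winv u) (winv v).
Proof.
elim=> {u v}.
- move=> w; exact: wc_refl.
- move=> u v _ IH; exact: wc_sym.
- move=> u v w _ IH1 _ IH2; exact: wc_trans IH2.
- move=> u u' v v' _ IH1 _ IH2; rewrite !winv_cat; exact: wc_cat.
- move=> x b; rewrite /winv /= /rev /= negbK.
  exact: wc_free.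
- move=> r Hr.
  apply: (@wc_trans _ _ (winv r ++ r)); last exact: winv_cancel.
  rewrite -[X in wcong _ X _]cats0.
  apply: wc_cat; [exact: wc_refl | apply: wc_sym; exact: wc_rel].
Qed.

Definition pelem := {w : word | onX X w}.

Definition pmul (u v : pelem) : pelem :=
  exist _ (sval u ++ sval v) (onX_cat (svalP u) (svalP v)).
Definition pinv (u : pelem) : pelem := exist _ (winv (sval u)) (onX_winv (svalP u)).
Definition pone : pelem := exist _ [::] onX_nil.
Definition peq (u v : pelem) : Prop := wcong R (sval u) (sval v).

Definition Pres : sgroup.
Proof.
refine (@SGroup pelem peq pmul pinv pone _ _ _ _ _ _ _ _); rewrite /peq /=.
- move=> x; exact: wc_refl.
- move=> x y; exact: wc_sym.
- move=> x y z; exact: wc_trans.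
- move=> x x' y y'; exact: wc_cat.
- move=> x x'; exact: wcong_winv.
- move=> x y z; rewrite catA; exact: wc_refl.
- move=> x; exact: wc_refl.
- move=> x; exact: winv_cancel.
Defined.

End PresGroup.

Definition gexpn (G : sgroup) (g : G) (k : nat) : G := iter k (gmul g) gone.

Definition gpowz (G : sgroup) (g : G) (z : int) : G :=
  match z with
  | Posz k => gexpn g k
  | Negz k => ginv (gexpn g k.+1)
  end.

Definition A_torsion_free (A : int -> Prop) (G : sgroup) : Prop :=
  forall (g : G) (n : int), A n -> geq (gpowz g n) gone -> geq g gone.

Definition is_hom (G H : sgroup) (f : G -> H) : Prop :=
  (forall x y, geq x y -> geq (f x) (f y)) /\
  (forall x y, geq (f (gmul x y)) (gmul (f x) (f y))).

Definition is_surj (G H : sgroup) (f : G -> H) : Prop :=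
  forall y : H, exists x : G, geq (f x) y.

Definition is_univ_A_tf_quotient (A : int -> Prop) (G H : sgroup) (h : G -> H) : Prop :=
  A_torsion_free A H /\ is_hom h /\ is_surj h /\
  forall (K : sgroup) (f : G -> K), A_torsion_free A K -> is_hom f ->
    exists phi : H -> K, is_hom phi /\ forall g : G, geq (f g) (phi (h g)).

Definition input_oracle (eX : nat -> option nat) (eR : nat -> option word)
  (eA : nat -> option int) : nat -> nat -> nat :=
  fun j n => match j with
             | 0 => pickle (eX n)
             | 1 => pickle (eR n)
             | 2 => pickle (eA n)
             | _ => 0
             end.

Arguments is_univ_A_tf_quotient A G H h : clear implicits.

From Pilot Require Import Defs.
From HB Require Import structures.
From mathcomp Require Import all_boot all_algebra.
From mathcomp Require Import zify.
From Stdlib Require ClassicalDescription.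
Set Implicit Arguments. Unset Strict Implicit. Unset Printing Implicit Defensive.

(* The kernel of [<X | R>] -> [<X | R>^{A-tf}] is the least set [tfker] of
   words over [X] that contains [R] and the empty word, is closed under
   inserting or deleting, anywhere in a word, a free pair [x^e x^-e] or an
   element of the set, and contains [w] as soon as it contains [w ^ n] for
   some nonzero [n \in A] (everything, if [0 \in A]). Every homomorphism to
   an A-torsion-free group kills [tfker], and [<X | tfker>] is A-torsion-free
   because [tfker] is closed under these roots; so [R' := tfker] presents the
   universal quotient, and [R] is contained in it.
   Membership in [tfker] has finite derivations, whose lines are justified by
   an answer of the enumerations of [X], [R], [A] or by earlier lines.
   Checking a coded derivation is primitive recursive in these oracles, so
   the algorithm outputs the conclusion of its input when the input codes a
   valid derivation, and nothing otherwise. *)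

(** * The kernel of the universal A-torsion-free quotient *)

Local Notation "x =g y" := (Defs.geq x y) (at level 70, no associativity).

Ltac gtrans m := apply: (geq_trans (y := m)).

Section GroupFacts.
Variable G : sgroup.
Implicit Types x y : G.

Lemma gmul_eq1l x y : x =g gone -> gmul x y =g y.
Proof.
by move=> x1; gtrans (gmul gone y); [exact: gmul_compat x1 (geq_refl y) | exact: gmul1g].
Qed.

Lemma gidem_eq1 y : gmul y y =g y -> y =g gone.
Proof.
move=> yy; gtrans (gmul (gmul (ginv y) y) y).
  gtrans (gmul gone y); first exact: geq_sym (gmul1g y).
  exact: gmul_compat (geq_sym (gmulVg y)) (geq_refl y).
gtrans (gmul (ginv y) (gmul y y)); first exact: geq_sym (gmulA _ _ _).
by gtrans (gmul (ginv y) y); [exact: gmul_compat (geq_refl _) yy | exact: gmulVg].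
Qed.

Lemma ginv1 : ginv (@gone G) =g gone.
Proof.
set i := ginv gone; apply/gidem_eq1/geq_sym.
gtrans (gmul gone i); first exact: geq_sym (gmul1g i).
gtrans (gmul (gmul i gone) i).
  exact: gmul_compat (geq_sym (gmulVg gone)) (geq_refl i).
gtrans (gmul i (gmul gone i)); first exact: geq_sym (gmulA _ _ _).
exact: gmul_compat (geq_refl i) (gmul1g i).
Qed.

Lemma ginv_eq1 x : ginv x =g gone -> x =g gone.
Proof.
move=> ix1; gtrans (gmul (ginv x) x); last exact: gmulVg.
by apply/geq_sym/gmul_eq1l.
Qed.

Lemma gpowz_eq1 (g : G) z : gpowz g z =g gone <-> gexpn g (absz z) =g gone.
Proof.
case: z => k //=; split; first exact: ginv_eq1.
by move=> gk1; gtrans (ginv (@gone G)); [exact: ginv_compat | exact: ginv1].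
Qed.

End GroupFacts.

Definition wpow (w : word) (m : nat) : word := iter m (cat w) [::].

Section Kernel.
Variables (X : nat -> Prop) (R : word -> Prop) (A : int -> Prop).

Inductive tfker : word -> Prop :=
| tfker_nil : tfker [::]
| tfker_rel r : R r -> tfker r
| tfker_insF u v x b : X x -> tfker (u ++ v) -> tfker (u ++ [:: (x, b); (x, ~~ b)] ++ v)
| tfker_delF u v x b : tfker (u ++ [:: (x, b); (x, ~~ b)] ++ v) -> tfker (u ++ v)
| tfker_ins u v s : tfker s -> tfker (u ++ v) -> tfker (u ++ s ++ v)
| tfker_del u v s : tfker s -> tfker (u ++ s ++ v) -> tfker (u ++ v)
| tfker_root w z : A z -> 0 < absz z -> tfker (wpow w (absz z)) -> tfker w
(* [g ^ 0 = 1] for every [g], so [0 \in A] kills every generator. *)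
| tfker_gen x : A 0 -> X x -> tfker [:: (x, false)].

Lemma onX_catE u v : onX X (u ++ v) <-> onX X u /\ onX X v.
Proof.
split; last by case; apply: onX_cat.
by move=> uv; split=> l l_in; apply: uv; rewrite mem_cat l_in ?orbT.
Qed.

Hypothesis onX_R : forall r, R r -> onX X r.

Lemma tfker_onX w : tfker w -> onX X w.
Proof.
elim=> {w} [|r /onX_R //|u v x b Xx _|u v x b _|u v s _ Xs _|u v s _ _ _
  |w z _ + _|x _ Xx] //; rewrite ?onX_catE.
- by move=> [Xu Xv]; split=> //; split=> // l; rewrite !inE => /orP [] /eqP ->.
- by case=> Xu [_ Xv].
- by case.
- by case=> Xu [_ Xv].
- by case: (absz z) => // m _ /= /onX_catE [].
- by move=> l; rewrite inE => /eqP ->.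
Qed.

Lemma tfker_all w : A 0 -> onX X w -> tfker w.
Proof.
move=> A0; elim: w => [|[x b] w IHw] Xw; first exact: tfker_nil.
have Xx : X x by apply: (Xw (x, b)); rewrite inE eqxx.
have Xw' : onX X w by move=> l l_in; apply: Xw; rewrite inE l_in orbT.
suff xb : tfker [:: (x, b)] by exact: (@tfker_ins [::] w _ xb (IHw Xw')).
case: b {Xw IHw}; last exact: tfker_gen.
exact: (@tfker_del [:: (x, true)] [::] _ (tfker_gen A0 Xx)
         (@tfker_insF [::] [::] _ true Xx tfker_nil)).
Qed.

End Kernel.

Lemma wcong_mono (R R' : word -> Prop) u v :
  (forall r, R r -> R' r) -> wcong R u v -> wcong R' u v.
Proof.
move=> sRR'; elim=> {u v} [w|u v _|u v w _ + _|u u' v v' _ + _|x b|r /sRR' Rr].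
- exact: wc_refl.
- exact: wc_sym.
- exact: wc_trans.
- exact: wc_cat.
- exact: wc_free.
- exact: wc_rel.
Qed.

Lemma wcong_ind_context (R : word -> Prop) (Q : word -> word -> Prop) :
  (forall u, Q u u) -> (forall u v, Q u v -> Q v u) ->
  (forall u v w, Q u v -> Q v w -> Q u w) ->
  (forall a b x e, Q (a ++ [:: (x, e); (x, ~~ e)] ++ b) (a ++ b)) ->
  (forall a b r, R r -> Q (a ++ r ++ b) (a ++ b)) ->
  forall u v, wcong R u v -> Q u v.
Proof.
move=> Qrefl Qsym Qtrans Qfree Qrel u v uv.
suff /(_ [::] [::]) : forall a b, Q (a ++ u ++ b) (a ++ v ++ b) by rewrite !cats0.
elim: uv => {u v} [w|u v _ IH|u v w _ IH1 _ IH2|u u' v v' _ IH1 _ IH2|x e|r Rr] a b.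
- exact: Qrefl.
- exact: Qsym.
- exact: Qtrans (IH1 a b) (IH2 a b).
- rewrite -!catA; apply: Qtrans (IH1 a (v ++ b)) _.
  by have := IH2 (a ++ u') b; rewrite -!catA.
- exact: Qfree.
- exact: Qrel.
Qed.

Section Universality.
Variables (X : nat -> Prop) (R R' : word -> Prop) (A : int -> Prop).
Hypothesis onX_R : forall r, R r -> onX X r.
Hypothesis R'_tfker : forall w, R' w <-> tfker X R A w.

Definition inX x : bool := ClassicalDescription.excluded_middle_informative (X x).

Lemma inXP x : reflect (X x) (inX x).
Proof.
by rewrite /inX; case: ClassicalDescription.excluded_middle_informative => ?; constructor.
Qed.

(* Intermediate words of a [wcong] derivation may leave [X]; [fX] erases the
   letters outside [X] so that they can be compared with words of [tfker]. *)
Definition fX (w : word) : word := filter (fun l : letter => inX l.1) w.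

Lemma onX_fX w : onX X (fX w).
Proof. by move=> l; rewrite mem_filter => /andP [/inXP]. Qed.

Lemma fX_id w : onX X w -> fX w = w.
Proof. by move=> Xw; apply/all_filterP/allP => l /Xw /inXP. Qed.

Lemma fX_cat u v : fX (u ++ v) = fX u ++ fX v.
Proof. exact: filter_cat. Qed.

Lemma fX_pair x e : fX [:: (x, e); (x, ~~ e)] =
  if inX x then [:: (x, e); (x, ~~ e)] else [::].
Proof. by rewrite /fX /=; case: (inX x). Qed.

Lemma onX_R' r : R' r -> onX X r.
Proof. by move/R'_tfker; apply: tfker_onX. Qed.

Lemma tfker_wcong u v : wcong R' u v -> tfker X R A (fX u) <-> tfker X R A (fX v).
Proof.
move: u v; apply: (wcong_ind_context (Q := fun u v =>
  tfker X R A (fX u) <-> tfker X R A (fX v))).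
- by [].
- by move=> u v; apply: iff_sym.
- by move=> u v w; apply: iff_trans.
- move=> a b x e; rewrite -/([:: (x, e); (x, ~~ e)] ++ b) !fX_cat fX_pair.
  case: inXP => Xx //.
  by split=> [/tfker_delF //|]; exact: tfker_insF.
- move=> a b r /[dup] /onX_R' /fX_id fX_r /R'_tfker ker_r /=.
  rewrite !fX_cat fX_r.
  by split=> [/(tfker_del ker_r)|/(tfker_ins ker_r)].
Qed.

Lemma sval_gexpn (g : Pres X R') m : sval (gexpn g m) = wpow (sval g) m.
Proof. by elim: m => //= m ->. Qed.

Lemma tfker_of_wcong w : onX X w -> wcong R' w [::] -> tfker X R A w.
Proof. by move=> Xw /tfker_wcong; rewrite (fX_id Xw) => ->; exact: tfker_nil. Qed.

Lemma Pres_torsion_free : A_torsion_free A (Pres X R').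
Proof.
move=> g z Az /gpowz_eq1 gz1; apply/wc_rel/R'_tfker.
have Xg : onX X (sval g) := svalP g.
have ker_gz : tfker X R A (wpow (sval g) `|z|).
  by rewrite -sval_gexpn; apply: tfker_of_wcong gz1; exact: svalP.
have [/eqP|z_gt0] := posnP `|z|; last exact: tfker_root Az z_gt0 ker_gz.
by rewrite absz_eq0 => /eqP z0; apply: tfker_all Xg; rewrite -z0.
Qed.

Section Factorization.
Variables (K : sgroup) (f : Pres X R -> K).
Hypotheses (f_hom : is_hom f) (K_tf : A_torsion_free A K).

Definition pf (w : word) : Pres X R := exist _ (fX w) (@onX_fX w).

Lemma f_sval x y : sval x = sval y -> f x =g f y.
Proof. by move=> xy; apply: f_hom.1; rewrite /= /peq xy; exact: wc_refl. Qed.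

Lemma f_one : f (pone X) =g gone.
Proof.
apply: gidem_eq1; gtrans (f (gmul (pone X : Pres X R) (pone X))).
  exact: geq_sym (f_hom.2 _ _).
exact: f_sval.
Qed.

Lemma f_pf_cat u v : f (pf (u ++ v)) =g gmul (f (pf u)) (f (pf v)).
Proof.
gtrans (f (gmul (pf u) (pf v))); last exact: f_hom.2.
by apply: f_sval; rewrite /= fX_cat.
Qed.

Lemma f_pf_trivial w : wcong R (fX w) [::] -> f (pf w) =g gone.
Proof. by move=> w1; gtrans (f (pone X)); [exact: f_hom.1 | exact: f_one]. Qed.

Lemma f_pf_ins u s v : f (pf s) =g gone -> f (pf (u ++ s ++ v)) =g f (pf (u ++ v)).
Proof.
move=> s1; gtrans (gmul (f (pf u)) (f (pf (s ++ v)))); first exact: f_pf_cat.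
gtrans (gmul (f (pf u)) (f (pf v))); last exact: geq_sym (f_pf_cat _ _).
apply: gmul_compat (geq_refl _) _.
by gtrans (gmul (f (pf s)) (f (pf v))); [exact: f_pf_cat | exact: gmul_eq1l].
Qed.

Lemma f_pf_pair x e : f (pf [:: (x, e); (x, ~~ e)]) =g gone.
Proof.
by apply: f_pf_trivial; rewrite fX_pair; case: inX; [exact: wc_free | exact: wc_refl].
Qed.

Lemma f_pf_wpow w m : f (pf (wpow w m)) =g gexpn (f (pf w)) m.
Proof.
elim: m => [|m IHm] /=; first by apply: f_pf_trivial; exact: wc_refl.
gtrans (gmul (f (pf w)) (f (pf (wpow w m)))); first exact: f_pf_cat.
exact: gmul_compat (geq_refl _) IHm.
Qed.

Lemma f_pf_tfker w : tfker X R A w -> f (pf w) =g gone.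
Proof.
elim=> {w} [|r Rr|u v x e _ _ IH|u v x e _ IH|u v s _ IHs _ IH|u v s _ IHs _ IH
  |w z Az _ _ IH|x A0 _].
- by apply: f_pf_trivial; exact: wc_refl.
- by apply: f_pf_trivial; rewrite fX_id; [exact: wc_rel | exact: onX_R].
- by gtrans (f (pf (u ++ v))); first exact: f_pf_ins (f_pf_pair x e).
- gtrans (f (pf (u ++ [:: (x, e); (x, ~~ e)] ++ v))) => //.
  exact: geq_sym (f_pf_ins _ _ (f_pf_pair x e)).
- by gtrans (f (pf (u ++ v))); first exact: f_pf_ins.
- by gtrans (f (pf (u ++ s ++ v))); first exact: geq_sym (f_pf_ins _ _ IHs).
- apply: (K_tf Az); apply/gpowz_eq1.
  by gtrans (f (pf (wpow w `|z|))); first exact: geq_sym (f_pf_wpow _ _).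
- exact: K_tf A0 (geq_refl _).
Qed.

Lemma f_pf_wcong u v : wcong R' u v -> f (pf u) =g f (pf v).
Proof.
move: u v; apply: (wcong_ind_context (Q := fun u v => f (pf u) =g f (pf v))).
- by move=> u; exact: geq_refl.
- by move=> u v; exact: geq_sym.
- by move=> u v w; exact: geq_trans.
- by move=> a b x e; exact: f_pf_ins (f_pf_pair x e).
- by move=> a b r /R'_tfker /f_pf_tfker; exact: f_pf_ins.
Qed.

End Factorization.

Theorem Pres_tfker_univ :
  is_univ_A_tf_quotient A (Pres X R) (Pres X R') (fun w : Pres X R => w : Pres X R').
Proof.
split; first exact: Pres_torsion_free.
split.
  split=> [x y|x y]; last exact: geq_refl.
  by apply: wcong_mono => r Rr; apply/R'_tfker/tfker_rel.
split; first by move=> y; exists y; exact: geq_refl.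
move=> K f K_tf f_hom; exists f; split=> [|g]; last exact: geq_refl.
split=> [x y xy|]; last exact: f_hom.2.
have f_pf_sval (g : Pres X R) : f g =g f (pf (sval g)).
  by apply: (f_sval f_hom); rewrite /= fX_id //; exact: svalP.
gtrans (f (pf (sval x))); first exact: f_pf_sval.
apply: geq_trans (f_pf_wcong f_hom K_tf (xy : wcong R' (sval x) (sval y))) _.
exact: geq_sym (f_pf_sval y).
Qed.

End Universality.

(** * Expressions compiled to [prog] *)

(* Variables are de Bruijn indices into the environment. [ELet e1 e2] pushes
   the value of [e1]; [ERec c b s] iterates [s] on [k :: acc :: env], [c]
   times, starting from [b]; [EAppk f ...] evaluates [f] in the environment
   made of its [k] arguments only. *)
Inductive expr : Type :=
| EVar (i : nat) | EZero | ESucc (e : expr) | EOrc (j : nat) (e : expr)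
| ELet (e1 e2 : expr) | ERec (c b s : expr)
| EApp1 (f e1 : expr) | EApp2 (f e1 e2 : expr) | EApp3 (f e1 e2 e3 : expr).

Fixpoint primrec (b : nat) (s : nat -> nat -> nat) (k : nat) : nat :=
  if k is k'.+1 then s k' (primrec b s k') else b.

Lemma eq_primrec b s1 s2 k : (forall k z, s1 k z = s2 k z) ->
  primrec b s1 k = primrec b s2 k.
Proof. by move=> eq_s; elim: k => //= k ->. Qed.

Section Eval.
Variable o : nat -> nat -> nat.

Fixpoint eval (e : expr) (env : seq nat) {struct e} : nat :=
  match e with
  | EVar i => nth 0 env i
  | EZero => 0
  | ESucc e => (eval e env).+1
  | EOrc j e => o j (eval e env)
  | ELet e1 e2 => eval e2 (eval e1 env :: env)
  | ERec c b s =>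
      let fix go k := if k is k'.+1 then eval s (k' :: go k' :: env) else eval b env
      in go (eval c env)
  | EApp1 f e1 => eval f [:: eval e1 env]
  | EApp2 f e1 e2 => eval f [:: eval e1 env; eval e2 env]
  | EApp3 f e1 e2 e3 => eval f [:: eval e1 env; eval e2 env; eval e3 env]
  end.

Lemma eval_rec c b s env : eval (ERec c b s) env =
  primrec (eval b env) (fun k z => eval s (k :: z :: env)) (eval c env).
Proof. by rewrite /=; elim: (eval c env) => //= k ->. Qed.

Definition projs n := mkseq PProj n.

Fixpoint compile (n : nat) (e : expr) : prog :=
  match e with
  | EVar i => if i < n then PProj i else PZero
  | EZero => PZero
  | ESucc e => PComp PSucc [:: compile n e]
  | EOrc j e => PComp (POracle j) [:: compile n e]
  | ELet e1 e2 => PComp (compile n.+1 e2) (compile n e1 :: projs n)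
  | ERec c b s => PComp (PRec (compile n b) (compile n.+2 s)) (compile n c :: projs n)
  | EApp1 f e1 => PComp (compile 1 f) [:: compile n e1]
  | EApp2 f e1 e2 => PComp (compile 2 f) [:: compile n e1; compile n e2]
  | EApp3 f e1 e2 e3 => PComp (compile 3 f) [:: compile n e1; compile n e2; compile n e3]
  end.

Lemma pevals_projs a : pevals o (projs (size a)) a a.
Proof.
suff pevals_iota m n :
    pevals o [seq PProj i | i <- iota m n] a [seq nth 0 a i | i <- iota m n].
  have := pevals_iota 0 (size a).
  by rewrite -[in X in pevals _ _ _ X]/(mkseq _ _) mkseq_nth.
elim: n m => [|n IHn] m /=; first exact: evs_nil.
by apply: evs_cons; [exact: ev_proj | exact: IHn].
Qed.

Lemma peval_rec pb ps b s a k :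
  (forall a', size a' = size a -> peval o pb a' (b a')) ->
  (forall a', size a' = (size a).+2 -> peval o ps a' (s a')) ->
  peval o (PRec pb ps) (k :: a)
        (primrec (b a) (fun k z => s (k :: z :: a)) k).
Proof.
move=> Hb Hs; elim: k => [|k IHk] /=; first exact/ev_rec0/Hb.
exact: ev_recS IHk (Hs _ _).
Qed.

Lemma ev_comp1 f g1 a y1 y : peval o g1 a y1 -> peval o f [:: y1] y ->
  peval o (PComp f [:: g1]) a y.
Proof. by move=> H1; apply: ev_comp; apply: evs_cons H1 (evs_nil _ _). Qed.

Lemma ev_comp2 f g1 g2 a y1 y2 y : peval o g1 a y1 -> peval o g2 a y2 ->
  peval o f [:: y1; y2] y -> peval o (PComp f [:: g1; g2]) a y.
Proof.
by move=> H1 H2; apply: ev_comp; apply: evs_cons H1 (evs_cons H2 (evs_nil _ _)).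
Qed.

Lemma ev_comp3 f g1 g2 g3 a y1 y2 y3 y : peval o g1 a y1 -> peval o g2 a y2 ->
  peval o g3 a y3 -> peval o f [:: y1; y2; y3] y ->
  peval o (PComp f [:: g1; g2; g3]) a y.
Proof.
move=> H1 H2 H3; apply: ev_comp.
exact: evs_cons H1 (evs_cons H2 (evs_cons H3 (evs_nil _ _))).
Qed.

Lemma ev_comp_push f g a y1 y : peval o g a y1 -> peval o f (y1 :: a) y ->
  peval o (PComp f (g :: projs (size a))) a y.
Proof. by move=> H1; apply: ev_comp; apply: evs_cons H1 (pevals_projs a). Qed.

Theorem compile_ok e n a : size a = n -> peval o (compile n e) a (eval e a).
Proof.
elim: e n a => [i||e IH|j e IH|e1 IH1 e2 IH2|c IHc b IHb s IHs|f IHf e1 IH1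
  |f IHf e1 IH1 e2 IH2|f IHf e1 IH1 e2 IH2 e3 IH3] n a Ha /=.
- case: ltnP => [_|Hi]; first exact: ev_proj.
  by rewrite nth_default ?Ha //; exact: ev_zero.
- exact: ev_zero.
- exact: ev_comp1 (IH _ _ Ha) (ev_succ o _).
- exact: ev_comp1 (IH _ _ Ha) (ev_oracle o j _).
- by rewrite -Ha; apply: ev_comp_push (IH1 _ _ erefl) (IH2 _ _ _).
- have /= -> := eval_rec c b s a; rewrite -Ha; apply: ev_comp_push (IHc _ _ erefl) _.
  by apply: peval_rec => a' Ha'; [apply: IHb | apply: IHs].
- exact: ev_comp1 (IH1 _ _ Ha) (IHf _ _ erefl).
- exact: ev_comp2 (IH1 _ _ Ha) (IH2 _ _ Ha) (IHf _ _ erefl).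
- exact: ev_comp3 (IH1 _ _ Ha) (IH2 _ _ Ha) (IH3 _ _ Ha) (IHf _ _ erefl).
Qed.

End Eval.

(** * Primitive recursive arithmetic *)

Fixpoint shift (c : nat) (e : expr) : expr :=
  match e with
  | EVar i => EVar (if i < c then i else i.+1)
  | EZero => EZero
  | ESucc e => ESucc (shift c e)
  | EOrc j e => EOrc j (shift c e)
  | ELet e1 e2 => ELet (shift c e1) (shift c.+1 e2)
  | ERec c0 b s => ERec (shift c c0) (shift c b) (shift c.+2 s)
  | EApp1 f e1 => EApp1 f (shift c e1)
  | EApp2 f e1 e2 => EApp2 f (shift c e1) (shift c e2)
  | EApp3 f e1 e2 e3 => EApp3 f (shift c e1) (shift c e2) (shift c e3)
  end.

Notation V0 := (EVar 0).
Notation V1 := (EVar 1).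
Notation V2 := (EVar 2).
Notation V3 := (EVar 3).

Fixpoint cst (m : nat) : expr := if m is m'.+1 then ESucc (cst m') else EZero.

Definition pred_e := locked (ERec V0 EZero V0).
Definition add_e := locked (ERec V0 V1 (ESucc V1)).
Definition sub_e := locked (ERec V1 V0 (EApp1 pred_e V1)).
Definition mul_e := locked (ERec V0 EZero (EApp2 add_e V1 V3)).
Definition pow2_e := locked (ERec V0 (cst 1) (EApp2 add_e V1 V1)).
Definition sg_e := locked (ERec V0 EZero (cst 1)).
Definition nz_e := locked (ERec V0 (cst 1) EZero).
Definition eqn_e :=
  locked (EApp1 nz_e (EApp2 add_e (EApp2 sub_e V0 V1) (EApp2 sub_e V1 V0))).
Definition ltn_e := locked (EApp1 sg_e (EApp2 sub_e V1 V0)).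
Definition ite_e := locked (EApp2 add_e (EApp2 mul_e (EApp1 sg_e V0) V1)
                                        (EApp2 mul_e (EApp1 nz_e V0) V2)).
Definition odd_e := locked (ERec V0 EZero (EApp1 nz_e V1)).

(* [p] is evaluated in [y :: env], while the recursion runs in
   [k :: acc :: env]: hence [shift 1 p]. *)
Definition search_e : expr -> expr -> expr := locked (fun p bnd =>
  ERec bnd EZero
    (EApp3 ite_e (EApp2 mul_e (EApp2 eqn_e V1 V0) (EApp1 sg_e (shift 1 p)))
                 (ESucc V0) V1)).

Lemma find_eq_size (T : Type) (P : pred T) s : (find P s == size s) = ~~ has P s.
Proof. by rewrite has_find eqn_leq find_size -leqNgt. Qed.

Lemma find_iota_eq (P : pred nat) b y :
  y < b -> P y -> (forall z, z < y -> ~~ P z) -> find P (iota 0 b) = y.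
Proof.
move=> Hyb Py Hmin; rewrite -(subnKC (ltnW Hyb)) iotaD find_cat size_iota.
have -> : has P (iota 0 y) = false.
  by apply/negbTE/hasPn => z; rewrite mem_iota => /andP [_ /Hmin].
have : 0 < b - y by rewrite subn_gt0.
by case: (b - y) => // n _; rewrite /= add0n Py addn0.
Qed.

Section Arithmetic.
Variable o : nat -> nat -> nat.
Local Notation eval := (eval o).

Lemma eval_shift e c env z : c <= size env ->
  eval (shift c e) (take c env ++ z :: drop c env) = eval e env.
Proof.
elim: e c env => [i||e IH|j e IH|e1 IH1 e2 IH2|c0 IHc b IHb s IHs|f _ e1 IH1
  |f _ e1 IH1 e2 IH2|f _ e1 IH1 e2 IH2 e3 IH3] c env Hc //=; rewrite ?IH ?IH1 ?IH2 ?IH3 //.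
- rewrite nth_cat size_takel //; case: (ltnP i c) => Hi; first by rewrite Hi nth_take.
  by rewrite ltnNge (leqW Hi) /= subSn //= nth_drop subnKC.
- exact: (IH2 c.+1 (_ :: env)).
- have := eval_rec o (shift c c0) (shift c b) (shift c.+2 s); rewrite /= => ->.
  have := eval_rec o c0 b s env; rewrite /= => ->; rewrite IHc // IHb //.
  by apply: eq_primrec => k acc; exact: (IHs c.+2 [:: k, acc & env]).
Qed.

Lemma eval_shift1 e k z env : eval (shift 1 e) [:: k, z & env] = eval e (k :: env).
Proof.
by have := eval_shift e z (c := 1) (env := k :: env); rewrite /= take0 drop0; apply.
Qed.

Lemma eval_cst m env : eval (cst m) env = m.
Proof. by elim: m => //= m ->. Qed.

Lemma pred_eE x : eval pred_e [:: x] = x.-1.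
Proof. by rewrite /pred_e -lock eval_rec; case: x. Qed.

Lemma add_eE x y : eval add_e [:: x; y] = x + y.
Proof. by rewrite /add_e -lock eval_rec /=; elim: x => //= x ->. Qed.

Lemma sub_eE x y : eval sub_e [:: x; y] = x - y.
Proof.
rewrite /sub_e -lock eval_rec /=.
by elim: y => [|y IHy] /=; rewrite ?subn0 // IHy pred_eE subnS.
Qed.

Lemma mul_eE x y : eval mul_e [:: x; y] = x * y.
Proof.
by rewrite /mul_e -lock eval_rec /=; elim: x => //= x ->; rewrite add_eE mulSn addnC.
Qed.

Lemma pow2_eE x : eval pow2_e [:: x] = 2 ^ x.
Proof.
rewrite /pow2_e -lock eval_rec /=.
by elim: x => //= x ->; rewrite add_eE expnS mul2n addnn.
Qed.

Lemma sg_eE x : eval sg_e [:: x] = (0 < x).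
Proof. by rewrite /sg_e -lock eval_rec /=; case: x. Qed.

Lemma nz_eE x : eval nz_e [:: x] = (x == 0).
Proof. by rewrite /nz_e -lock eval_rec /=; case: x. Qed.

Lemma eqn_eE x y : eval eqn_e [:: x; y] = (x == y).
Proof. by rewrite /eqn_e -lock /= !sub_eE add_eE nz_eE addn_eq0 !subn_eq0 -eqn_leq. Qed.

Lemma ltn_eE x y : eval ltn_e [:: x; y] = (x < y).
Proof. by rewrite /ltn_e -lock /= sub_eE sg_eE subn_gt0. Qed.

Lemma ite_eE c t e : eval ite_e [:: c; t; e] = if c == 0 then e else t.
Proof.
rewrite /ite_e -lock /= !mul_eE sg_eE nz_eE add_eE.
by case: c => [|c] /=; rewrite ?mul1n ?mul0n ?addn0.
Qed.

Lemma odd_eE x : eval odd_e [:: x] = odd x.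
Proof.
rewrite /odd_e -lock eval_rec /=.
by elim: x => //= x ->; rewrite nz_eE; case: (odd x).
Qed.

Lemma search_eE p bnd env : eval (search_e p bnd) env =
  find (fun y => eval p (y :: env) == 0) (iota 0 (eval bnd env)).
Proof.
rewrite /search_e -lock eval_rec; elim: (eval bnd env) => // k IHk.
rewrite [primrec _ _ _]/= IHk ite_eE mul_eE eqn_eE sg_eE eval_shift1.
rewrite -(addn1 k) iotaD find_cat size_iota add0n.
set P := fun y => _ == 0; rewrite -[X in find _ _ == X](size_iota 0 k) find_eq_size.
case: (boolP (has P _)) => [//|/hasNfind ->]; rewrite size_iota /= /P lt0n.
by case: (eval p _ == 0); rewrite ?addn0.
Qed.

End Arithmetic.

(** * Arithmetic on codes of sequences *)

Definition div_e := locked (search_e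
  (EApp1 nz_e (EApp2 ltn_e V1 (EApp2 mul_e (ESucc V0) V2))) (ESucc V0)).
Definition head_e := locked (search_e
  (EApp1 nz_e (EApp1 odd_e (EApp2 div_e V1 (EApp1 pow2_e V0)))) V0).
Definition behead_e := locked (EApp2 div_e
  (EApp1 pred_e (EApp2 div_e V0 (EApp1 pow2_e (EApp1 head_e V0)))) (cst 2)).
Definition drop_e := locked (ERec V0 V1 (EApp1 behead_e V1)).
Definition nth_e := locked (EApp1 head_e (EApp2 drop_e V0 V1)).
Definition bitlen_e := locked (search_e
  (EApp1 nz_e (EApp2 ltn_e V1 (EApp1 pow2_e V0))) (ESucc V0)).
Definition catc_e :=
  locked (EApp2 add_e V0 (EApp2 mul_e (EApp1 pow2_e (EApp1 bitlen_e V0)) V1)).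
Definition powc_e := locked (ERec V1 EZero (EApp2 catc_e V2 V1)).

Definition bitlen (c : nat) := find (fun y => c < 2 ^ y) (iota 0 c.+1).
Definition catc u v := u + 2 ^ bitlen u * v.
Definition powc u m := primrec 0 (fun _ => catc u) m.

Fixpoint code_width (s : seq nat) := if s is x :: s' then x + (code_width s').+1 else 0.

Lemma codeS x s : CodeSeq.code (x :: s) = 2 ^ x * (CodeSeq.code s).*2.+1.
Proof. by []. Qed.

Lemma code_width_bound s : CodeSeq.code s < 2 ^ code_width s /\
  (s != [::] -> 2 ^ (code_width s).-1 <= CodeSeq.code s).
Proof.
elim: s => [|x s [IH1 IH2]]; first by split.
rewrite codeS [code_width _]/=; split.
  rewrite addnS expnS expnD mulnCA ltn_pmul2l ?expn_gt0 //; lia.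
move=> _; rewrite addnS /= expnD leq_pmul2l ?expn_gt0 //.
case: s IH1 IH2 => [|y s] /=; first by rewrite expn0.
move=> _ /(_ isT); rewrite addnS /= expnS; lia.
Qed.

Lemma bitlen_code s : bitlen (CodeSeq.code s) = code_width s.
Proof.
have [lt_code ge_code] := code_width_bound s; apply: find_iota_eq => //.
  case: s lt_code ge_code => [|x s] //= _ /(_ isT).
  by rewrite addnS /= ltnS; apply: leq_trans; exact: ltn_expl.
case: s lt_code ge_code => [|x s] //= _ /(_ isT) ge_code z lt_z.
by rewrite -leqNgt (leq_trans _ ge_code) // leq_exp2l //; move: lt_z; rewrite addnS.
Qed.

Lemma code_cat s t :
  CodeSeq.code (s ++ t) = catc (CodeSeq.code s) (CodeSeq.code t).
Proof.
rewrite /catc bitlen_code; elim: s => [|x s IH] /=; first by rewrite mul1n.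
rewrite IH [code_width _]/= addnS expnS expnD; lia.
Qed.

Lemma catcE u v : catc u v = CodeSeq.code (CodeSeq.decode u ++ CodeSeq.decode v).
Proof. by rewrite code_cat !CodeSeq.decodeK. Qed.

Section CodeArithmetic.
Variable o : nat -> nat -> nat.
Local Notation eval := (eval o).

Lemma div_eE x d : 0 < d -> eval div_e [:: x; d] = x %/ d.
Proof.
move=> d_gt0; rewrite /div_e -lock search_eE; apply: find_iota_eq => /=.
- by rewrite ltnS leq_div.
- by rewrite nz_eE ltn_eE mul_eE !eqb0 negbK ltn_ceil.
- move=> z lt_z; rewrite nz_eE ltn_eE mul_eE !eqb0 negbK -leqNgt.
  exact: leq_trans (leq_mul lt_z (leqnn d)) (leq_divM x d).
Qed.

Lemma head_eE x m : eval head_e [:: 2 ^ x * m.*2.+1] = x.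
Proof.
have pow2_gt0 y : 0 < eval pow2_e [:: y] by rewrite pow2_eE expn_gt0.
rewrite /head_e -lock search_eE; apply: find_iota_eq => /=.
- exact: leq_trans (ltn_expl x (ltnSn 1)) (leq_pmulr _ _).
- by rewrite nz_eE odd_eE div_eE // pow2_eE mulKn ?expn_gt0 //= odd_double.
- move=> z lt_z; rewrite nz_eE odd_eE div_eE // pow2_eE !eqb0 negbK.
  rewrite -(subnKC (ltnW lt_z)) expnD -mulnA mulKn ?expn_gt0 // oddM oddX.
  by rewrite subn_eq0 leqNgt lt_z.
Qed.

Lemma head_e0 : eval head_e [:: 0] = 0.
Proof. by rewrite /head_e -lock search_eE. Qed.

Lemma behead_eE x m : eval behead_e [:: 2 ^ x * m.*2.+1] = m.
Proof.
rewrite /behead_e -lock /= head_eE pow2_eE div_eE // div_eE ?expn_gt0 //.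
by rewrite mulKn ?expn_gt0 // pred_eE /= -mul2n mulKn.
Qed.

Lemma behead_e0 : eval behead_e [:: 0] = 0.
Proof. by rewrite /behead_e -lock /= head_e0 pow2_eE !div_eE // div0n pred_eE. Qed.

Lemma head_code s : eval head_e [:: CodeSeq.code s] = head 0 s.
Proof. by case: s => [|x s]; [exact: head_e0 | rewrite codeS head_eE]. Qed.

Lemma behead_code s : eval behead_e [:: CodeSeq.code s] = CodeSeq.code (behead s).
Proof. by case: s => [|x s]; [exact: behead_e0 | rewrite codeS behead_eE]. Qed.

Lemma drop_code i s : eval drop_e [:: i; CodeSeq.code s] = CodeSeq.code (drop i s).
Proof.
rewrite /drop_e -lock eval_rec drop_behead /=.
by elim: i => //= i ->; rewrite behead_code.
Qed.

Lemma nth_eE i c : eval nth_e [:: i; c] = nth 0 (CodeSeq.decode c) i.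
Proof.
rewrite /nth_e -lock /= -{1}[c]CodeSeq.decodeK drop_code head_code.
by rewrite -nth0 nth_drop addn0.
Qed.

Lemma bitlen_eE c : eval bitlen_e [:: c] = bitlen c.
Proof.
rewrite /bitlen_e -lock search_eE /bitlen; apply: eq_find => y.
by rewrite /= nz_eE ltn_eE pow2_eE !eqb0 negbK.
Qed.

Lemma catc_eE u v : eval catc_e [:: u; v] = catc u v.
Proof. by rewrite /catc_e -lock /= bitlen_eE pow2_eE mul_eE add_eE. Qed.

Lemma powc_eE u m : eval powc_e [:: u; m] = powc u m.
Proof.
rewrite /powc_e -lock eval_rec /powc; apply: eq_primrec => k z /=.
by rewrite catc_eE.
Qed.

End CodeArithmetic.

(** * Checking derivations of kernel elements *)

Definition ccons a c := 2 ^ a * c.*2.+1.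
Definition letter_code x b := ccons x (ccons b 0).
Definition pair_code x b := ccons (letter_code x b) (ccons (letter_code x (1 - b)) 0).
Definition int_code sg k := if sg == 0 then ccons (ccons k 0) (ccons 0 0)
                            else ccons 0 (ccons (ccons k 0) 0).

Definition ccons_e :=
  locked (EApp2 mul_e (EApp1 pow2_e V0) (ESucc (EApp2 add_e V1 V1))).
Definition letter_e := locked (EApp2 ccons_e V0 (EApp2 ccons_e V1 EZero)).
Definition pair_e := locked (EApp2 ccons_e (EApp2 letter_e V0 V1)
  (EApp2 ccons_e (EApp2 letter_e V0 (EApp2 sub_e (cst 1) V1)) EZero)).
Definition int_e := locked (EApp3 ite_e V0
  (EApp2 ccons_e EZero (EApp2 ccons_e (EApp2 ccons_e V1 EZero) EZero))
  (EApp2 ccons_e (EApp2 ccons_e V1 EZero) (EApp2 ccons_e EZero EZero))).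

(* A certificate is coded as [CodeSeq.code (N :: l_0 ++ ... ++ l_(N-1))],
   each line [l_k] having 8 fields; field 1 of a line is its conclusion. *)
Definition cert_len n := nth 0 (CodeSeq.decode n) 0.
Definition cert_field n k f := nth 0 (CodeSeq.decode n) (k * 8 + f).+1.
Definition derived_before (F : nat -> nat -> nat) k v :=
  has (fun j => F j 1 == v) (iota 0 k).

(* Line [l] concludes the coded word [w := l 1] by rule [l 0]: (0) [w] is
   empty; (1) [w] is the relator [eR (l 2)]; (2, 3) [w] arises from a derived
   word by inserting (deleting) the free pair [pair_code (l 4) (l 5)] between
   its parts [l 2] and [l 3], with [eX (l 6) = l 4] for an insertion; (4, 5)
   the same with the derived word [l 4]; (6) [w ^ |z|] is derived, where
   [eA (l 4) = z] and [pickle z = int_code (l 2) (l 3)]; (7) [w] is the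
   generator [eX (l 4) = l 2], and [eA (l 3) = 0]. An oracle answering [v]
   returns [pickle (Some v) = 2 ^ pickle v]. *)
Definition line_ok (o : nat -> nat -> nat) (E : nat -> bool) (l : nat -> nat) :=
  let w := l 1 in
  match l 0 with
  | 0 => w == 0
  | 1 => o 1 (l 2) == 2 ^ w
  | 2 => [&& o 0 (l 6) == 2 ^ l 4, l 5 < 2, E (catc (l 2) (l 3)) &
             w == catc (l 2) (catc (pair_code (l 4) (l 5)) (l 3))]
  | 3 => [&& l 5 < 2, E (catc (l 2) (catc (pair_code (l 4) (l 5)) (l 3))) &
             w == catc (l 2) (l 3)]
  | 4 => [&& E (catc (l 2) (l 3)), E (l 4) & w == catc (l 2) (catc (l 4) (l 3))]
  | 5 => [&& E (catc (l 2) (catc (l 4) (l 3))), E (l 4) & w == catc (l 2) (l 3)]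
  | 6 => [&& l 2 < 2, o 2 (l 4) == 2 ^ int_code (l 2) (l 3), 0 < l 3 + l 2 &
             E (powc w (l 3 + l 2))]
  | 7 => [&& o 2 (l 3) == 2 ^ int_code 0 0, o 0 (l 4) == 2 ^ l 2 &
             w == ccons (letter_code (l 2) 0) 0]
  | _ => false
  end.

Definition cert_valid o n := (0 < cert_len n) &&
  all (fun k => line_ok o (derived_before (cert_field n) k) (cert_field n k))
      (iota 0 (cert_len n)).

Definition cert_concl n := cert_field n (cert_len n).-1 1.

Definition field_e :=
  locked (EApp2 nth_e (ESucc (EApp2 add_e (EApp2 mul_e V1 (cst 8)) V2)) V0).
Definition derived_before_e := locked (EApp2 ltn_e
  (search_e (EApp1 nz_e (EApp2 eqn_e (EApp3 field_e V1 V0 (cst 1)) V3)) V1) V1).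

Section LineExpr.
Local Notation "'L' i" := (EApp3 field_e V0 V1 (cst i)) (at level 0, i at level 0).
Local Notation "'D' t" := (EApp3 derived_before_e V0 V1 t) (at level 0, t at level 0).
Local Notation "a '=E' b" := (EApp2 eqn_e a b) (at level 70).
Local Notation "a '&E' b" := (EApp2 mul_e a b) (at level 40, left associativity).
Local Notation "a '+E' b" := (EApp2 add_e a b) (at level 50, left associativity).
Local Notation "a '<E' b" := (EApp2 ltn_e a b) (at level 70).
Local Notation catE a b := (EApp2 catc_e a b).
Local Notation pow2E a := (EApp1 pow2_e a).

Definition rule_e (r : nat) : expr :=
  match r with
  | 0 => L 1 =E EZero
  | 1 => EOrc 1 (L 2) =E pow2E (L 1)
  | 2 => (EOrc 0 (L 6) =E pow2E (L 4)) &E (L 5 <E cst 2) &E D (catE (L 2) (L 3))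
         &E (L 1 =E catE (L 2) (catE (EApp2 pair_e (L 4) (L 5)) (L 3)))
  | 3 => (L 5 <E cst 2) &E D (catE (L 2) (catE (EApp2 pair_e (L 4) (L 5)) (L 3)))
         &E (L 1 =E catE (L 2) (L 3))
  | 4 => D (catE (L 2) (L 3)) &E D (L 4) &E (L 1 =E catE (L 2) (catE (L 4) (L 3)))
  | 5 => D (catE (L 2) (catE (L 4) (L 3))) &E D (L 4) &E (L 1 =E catE (L 2) (L 3))
  | 6 => (L 2 <E cst 2) &E (EOrc 2 (L 4) =E pow2E (EApp2 int_e (L 2) (L 3)))
         &E (EZero <E L 3 +E L 2) &E D (EApp2 powc_e (L 1) (L 3 +E L 2))
  | _ => (EOrc 2 (L 3) =E pow2E (EApp2 int_e EZero EZero))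
         &E (EOrc 0 (L 4) =E pow2E (L 2))
         &E (L 1 =E EApp2 ccons_e (EApp2 letter_e (L 2) EZero) EZero)
  end.

Definition line_ok_e := locked (foldr (fun r e => ((L 0 =E cst r) &E rule_e r) +E e)
  EZero (iota 0 8)).

(* Outputs [pickle (Some w) = 2 ^ pickle w] on a valid certificate of [w],
   and [pickle None = 0] otherwise. *)
Definition cert_out_e := locked (
  (EApp1 sg_e (EApp2 nth_e EZero V0)
   &E (search_e (EApp2 line_ok_e V1 V0) (EApp2 nth_e EZero V0) =E EApp2 nth_e EZero V0))
  &E pow2E (EApp3 field_e V0 (EApp1 pred_e (EApp2 nth_e EZero V0)) (cst 1))).

End LineExpr.

Section CheckerEval.
Variable o : nat -> nat -> nat.
Local Notation eval := (eval o).

Lemma ccons_eE a c : eval ccons_e [:: a; c] = ccons a c.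
Proof. by rewrite /ccons_e -lock /= pow2_eE add_eE mul_eE addnn. Qed.

Lemma letter_eE x b : eval letter_e [:: x; b] = letter_code x b.
Proof. by rewrite /letter_e -lock /= !ccons_eE. Qed.

Lemma pair_eE x b : eval pair_e [:: x; b] = pair_code x b.
Proof. by rewrite /pair_e -lock /= !ccons_eE !letter_eE sub_eE. Qed.

Lemma int_eE sg k : eval int_e [:: sg; k] = int_code sg k.
Proof. by rewrite /int_e -lock /= !ccons_eE ite_eE. Qed.

Lemma field_eE n k f : eval field_e [:: n; k; f] = cert_field n k f.
Proof. by rewrite /field_e -lock /= mul_eE add_eE nth_eE. Qed.

Lemma derived_before_eE n k v :
  eval derived_before_e [:: n; k; v] = derived_before (cert_field n) k v.
Proof.
rewrite /derived_before_e -lock /= search_eE ltn_eE /derived_before.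
rewrite -[X in _ < X](size_iota 0 k) -has_find; congr (nat_of_bool _).
by apply: eq_has => j /=; rewrite nz_eE eqn_eE field_eE !eqb0 negbK.
Qed.

Lemma line_ok_eE n k :
  eval line_ok_e [:: n; k] = line_ok o (derived_before (cert_field n) k) (cert_field n k).
Proof.
rewrite /line_ok_e -lock /=.
rewrite !(field_eE, derived_before_eE, eqn_eE, mul_eE, ltn_eE, catc_eE, pow2_eE,
  pair_eE, int_eE, letter_eE, ccons_eE, add_eE, powc_eE, eval_cst) !mulnb /line_ok.
by case: (cert_field n k 0) => [|[|[|[|[|[|[|[|r]]]]]]]] /=; rewrite ?addn0 ?add0n ?andbA.
Qed.

Lemma cert_out_eE n : eval cert_out_e [:: n] = cert_valid o n * 2 ^ cert_concl n.
Proof.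
rewrite /cert_out_e -lock /= search_eE !nth_eE sg_eE pred_eE field_eE pow2_eE.
rewrite !mul_eE eqn_eE /= nth_eE -/(cert_len n) /cert_valid -mulnb.
congr (_ * nat_of_bool _ * _).
rewrite -[X in _ == X](size_iota 0 (cert_len n)) find_eq_size -all_predC.
by apply: eq_all => k /=; rewrite line_ok_eE eqb0 negbK.
Qed.

Lemma cert_out_peval n :
  peval o (compile 1 cert_out_e) [:: n] (cert_valid o n * 2 ^ cert_concl n).
Proof. by rewrite -cert_out_eE; exact: compile_ok. Qed.

End CheckerEval.

Lemma pickle_some (T : countType) (v : T) : pickle (Some v) = 2 ^ pickle v.
Proof. by rewrite -[RHS]muln1. Qed.

Lemma pickle_pair x (b : bool) : pickle ([:: (x, b); (x, ~~ b)] : word) = pair_code x b.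
Proof. by case: b. Qed.

Lemma pair_code_pickle x b : b < 2 ->
  pair_code x b = pickle ([:: (x, b == 1); (x, ~~ (b == 1))] : word).
Proof. by rewrite pickle_pair; case: b => [|[|]]. Qed.

Lemma int_code_pickle sg k : sg < 2 ->
  int_code sg k = pickle (if sg == 0 then Posz k else Negz k).
Proof. by case: sg => [|[|]]. Qed.

Lemma catc_pickle (u v : word) : catc (pickle u) (pickle v) = pickle (u ++ v).
Proof.
by rewrite -[pickle (u ++ v)]/(CodeSeq.code (map pickle (u ++ v))) map_cat code_cat.
Qed.

Lemma powc_pickle (u : word) m : powc (pickle u) m = pickle (wpow u m).
Proof. by elim: m => //= m IHm; rewrite -catc_pickle -IHm. Qed.

Lemma map_eq_cat (T U : Type) (f : T -> U) u s t : map f u = s ++ t ->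
  exists u1 u2, [/\ u = u1 ++ u2, map f u1 = s & map f u2 = t].
Proof.
move=> fu; exists (take (size s) u), (drop (size s) u).
by rewrite cat_take_drop map_take map_drop fu take_size_cat // drop_size_cat.
Qed.

Lemma catc_pickleP c1 c2 (u : word) : catc c1 c2 = pickle u ->
  exists u1 u2, [/\ u = u1 ++ u2, pickle u1 = c1 & pickle u2 = c2].
Proof.
rewrite catcE -[pickle u]/(CodeSeq.code (map pickle u)) => /(can_inj CodeSeq.codeK).
case/esym/map_eq_cat=> u1 [u2 [-> m1 m2]]; exists u1, u2; split=> //.
  by rewrite -[c1]CodeSeq.decodeK -m1.
by rewrite -[c2]CodeSeq.decodeK -m2.
Qed.

Lemma catc3_pickleP c1 c2 c3 (u : word) : catc c1 (catc c2 c3) = pickle u ->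
  exists u1 u2 u3, [/\ u = u1 ++ u2 ++ u3, pickle u1 = c1, pickle u2 = c2 & pickle u3 = c3].
Proof.
case/catc_pickleP=> u1 [v [-> <- /esym /catc_pickleP [u2 [u3 [-> <- <-]]]]].
by exists u1, u2, u3.
Qed.

Lemma line_ok_mono o (E E' : pred nat) l :
  (forall v, E v -> E' v) -> line_ok o E l -> line_ok o E' l.
Proof.
move=> EE'; rewrite /line_ok; case: (l 0) => [|[|[|[|[|[|[|[|r]]]]]]]] //=.
- by case/and4P=> -> -> /EE' -> ->.
- by case/and3P=> -> /EE' -> ->.
- by case/and3P=> /EE' -> /EE' -> ->.
- by case/and3P=> /EE' -> /EE' -> ->.
- by case/and4P=> -> -> -> /EE' ->.
Qed.

Lemma line_ok_ext o (E E' : pred nat) l l' : E =1 E' -> {in gtn 8, l =1 l'} ->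
  line_ok o E l = line_ok o E' l'.
Proof.
move=> EE' ll'; rewrite /line_ok !ll' //.
by case: (l' 0) => [|[|[|[|[|[|[|[|r]]]]]]]] //=; rewrite !EE'.
Qed.

Lemma derived_beforeP F k v : reflect (exists2 j, j < k & F j 1 = v) (derived_before F k v).
Proof.
apply: (iffP hasP) => [[j] | [j lt_jk <-]]; last by exists j; rewrite ?mem_iota.
by rewrite mem_iota => /andP [_ lt_jk] /eqP; exists j.
Qed.

Section Certificates.
Variables (eX : nat -> option nat) (eR : nat -> option word) (eA : nat -> option int).
Local Notation o := (input_oracle eX eR eA).
Local Notation X := (enum_set eX).
Local Notation R := (enum_set eR).
Local Notation A := (enum_set eA).
Local Notation tfker := (tfker X R A).

Lemma oracle_some (T : countType) (e : nat -> option T) j c :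
  pickle (e j) == 2 ^ c -> exists2 v, pickle v = c & enum_set e v.
Proof.
case ej: (e j) => [v|] /=; last by rewrite eq_sym expn_eq0.
by rewrite pickle_some eqn_exp2l // => /eqP <-; exists v => //; exists j.
Qed.

Definition coded (v : nat) := exists2 u : word, pickle u = v & tfker u.

Lemma coded_pickle (w : word) : tfker w -> coded (pickle w).
Proof. by exists w. Qed.

Lemma coded_root z m c : A z -> 0 < m -> `|z| = m -> coded (powc c m) -> coded c.
Proof.
move=> Az m_gt0 zm [u0 u0E ker_u0].
have [u uc] : exists u : word, pickle u = c.
  case: m m_gt0 u0E {zm ker_u0} => // m _ /esym /catc_pickleP [u [_ [_ uc _]]].
  by exists u.
move: u0E; rewrite -uc powc_pickle => /(pcan_inj pickleK) u0E.
by apply: coded_pickle; apply: (tfker_root Az); rewrite zm // -u0E.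
Qed.

Lemma line_ok_sound (E : pred nat) (l : nat -> nat) :
  (forall v, E v -> coded v) -> line_ok o E l -> coded (l 1).
Proof.
move=> E_coded; rewrite /line_ok; case: (l 0) => [|[|[|[|[|[|[|[|r]]]]]]]] //=.
- by move/eqP->; apply: (coded_pickle (w := [::])); exact: tfker_nil.
- by case/oracle_some=> r <- Rr; apply: coded_pickle; exact: tfker_rel Rr.
- case/and4P=> /oracle_some [x <- Xx] b_lt2 /E_coded [u0 u0E ker_u0] /eqP ->.
  case/esym/catc_pickleP: u0E ker_u0 => u [v [-> <- <-]] ker_uv.
  rewrite pair_code_pickle // !catc_pickle.
  by apply: coded_pickle; exact: tfker_insF Xx ker_uv.
- case/and3P=> b_lt2 /E_coded [u0 u0E ker_u0] /eqP ->.
  rewrite pair_code_pickle // in u0E.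
  case/esym/catc3_pickleP: u0E ker_u0 => u [p [v [-> <- /(pcan_inj pickleK) -> <-]]].
  move=> ker_upv.
  by rewrite catc_pickle; apply: coded_pickle; exact: tfker_delF ker_upv.
- case/and3P=> /E_coded [u0 u0E ker_u0] /E_coded [s <- ker_s] /eqP ->.
  case/esym/catc_pickleP: u0E ker_u0 => u [v [-> <- <-]] ker_uv.
  by rewrite !catc_pickle; apply: coded_pickle; exact: tfker_ins ker_s ker_uv.
- case/and3P=> /E_coded [u0 u0E ker_u0] /E_coded [s sE ker_s] /eqP ->.
  rewrite -sE in u0E; case/esym/catc3_pickleP: u0E ker_u0.
  move=> u [s' [v [-> <- /(pcan_inj pickleK) -> <-]]] ker_usv.
  by rewrite catc_pickle; apply: coded_pickle; exact: tfker_del ker_s ker_usv.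
- case/and4P=> sg_lt2 /oracle_some [z zE Az] k_gt0 /E_coded.
  move: zE; rewrite int_code_pickle // => /(pcan_inj pickleK) zE.
  apply: (@coded_root z _ (l 1) Az k_gt0); rewrite zE.
  by case: (l 2) sg_lt2 => [|[|]] //; rewrite ?addn0 ?addn1.
- case/and3P=> /oracle_some [z zE Az] /oracle_some [x <- Xx] /eqP ->.
  move: zE Az; rewrite (@int_code_pickle 0 0) // => /(pcan_inj pickleK) -> Az.
  by apply: (coded_pickle (w := [:: (x, false)])); exact: tfker_gen Az Xx.
Qed.

Lemma derived_sound (F : nat -> nat -> nat) N :
  (forall k, k < N -> line_ok o (derived_before F k) (F k)) ->
  forall k, k < N -> coded (F k 1).
Proof.
move=> ok; elim/ltn_ind => k IHk lt_kN; apply: line_ok_sound (ok k lt_kN).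
by move=> v /derived_beforeP [j lt_jk <-]; apply: IHk lt_jk (ltn_trans lt_jk lt_kN).
Qed.

Lemma cert_valid_sound n : cert_valid o n -> coded (cert_concl n).
Proof.
case/andP=> len_gt0 /allP ok; apply: (derived_sound (N := cert_len n)).
  by move=> k lt_k; apply: ok; rewrite mem_iota.
by rewrite prednK.
Qed.

Definition line_field (ls : seq (seq nat)) k f := nth 0 (nth [::] ls k) f.
Definition lines_ok ls :=
  forall k, k < size ls -> line_ok o (derived_before (line_field ls) k) (line_field ls k).
Definition derivation (u : word) := exists ls : seq (seq nat),
  [/\ all (fun l => size l == 8) ls, 0 < size ls, lines_ok ls &
      line_field ls (size ls).-1 1 = pickle u].

Lemma line_field_catl ls1 ls2 k :
  k < size ls1 -> line_field (ls1 ++ ls2) k = line_field ls1 k.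
Proof. by move=> lt_k; rewrite /line_field nth_cat lt_k. Qed.

Lemma line_field_catr ls1 ls2 k : line_field (ls1 ++ ls2) (size ls1 + k) = line_field ls2 k.
Proof. by rewrite /line_field nth_cat ltnNge leq_addr addKn. Qed.

Lemma derived_before_catl ls1 ls2 k k' v : k <= size ls1 -> k <= k' ->
  derived_before (line_field ls1) k v -> derived_before (line_field (ls1 ++ ls2)) k' v.
Proof.
move=> le_k1 le_kk' /derived_beforeP [j lt_jk <-]; apply/derived_beforeP; exists j.
  exact: leq_trans lt_jk le_kk'.
by rewrite line_field_catl // (leq_trans lt_jk le_k1).
Qed.

Lemma derived_before_catr ls1 ls2 k k' v : size ls1 + k <= k' ->
  derived_before (line_field ls2) k v -> derived_before (line_field (ls1 ++ ls2)) k' v.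
Proof.
move=> le_k' /derived_beforeP [j lt_jk <-]; apply/derived_beforeP; exists (size ls1 + j).
  by apply: leq_trans le_k'; rewrite ltn_add2l.
by rewrite line_field_catr.
Qed.

Lemma derived_before_concl ls : 0 < size ls ->
  derived_before (line_field ls) (size ls) (line_field ls (size ls).-1 1).
Proof. by move=> ls_gt0; apply/derived_beforeP; exists (size ls).-1; rewrite ?prednK. Qed.

Lemma lines_ok_app ls1 ls2 : lines_ok ls1 ->
  (forall k, k < size ls2 ->
     line_ok o (derived_before (line_field (ls1 ++ ls2)) (size ls1 + k))
               (line_field ls2 k)) ->
  lines_ok (ls1 ++ ls2).
Proof.
move=> ok1 ok2 k; rewrite size_cat => lt_k; case: (ltnP k (size ls1)) => [lt_k1|le_1k].
  rewrite line_field_catl //; apply: line_ok_mono (ok1 k lt_k1).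
  by move=> v; apply: derived_before_catl (ltnW lt_k1) (leqnn k).
by rewrite -(subnKC le_1k) line_field_catr; apply: ok2; lia.
Qed.

Lemma lines_ok_cat ls1 ls2 : lines_ok ls1 -> lines_ok ls2 -> lines_ok (ls1 ++ ls2).
Proof.
move=> ok1 ok2; apply: lines_ok_app => // k lt_k; apply: line_ok_mono (ok2 k lt_k).
by move=> v; apply: derived_before_catr.
Qed.

Lemma derivation_snoc ls line (u : word) :
  all (fun l => size l == 8) ls -> lines_ok ls -> size line == 8 ->
  line_ok o (derived_before (line_field ls) (size ls)) (nth 0 line) ->
  nth 0 line 1 = pickle u -> derivation u.
Proof.
move=> size_ls ok_ls size_line ok_line concl_u; exists (ls ++ [:: line]).
rewrite size_cat addn1 /= -[size ls]addn0 line_field_catr; split=> //.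
  by rewrite all_cat size_ls /= size_line.
apply: lines_ok_app => // -[|k] //= _; rewrite addn0.
apply: line_ok_mono ok_line => v; exact: derived_before_catl (leqnn _) (leqnn _).
Qed.

Lemma derivation_join (s t u : word) line : derivation s -> derivation t ->
  size line == 8 -> (forall E : pred nat, E (pickle s) -> E (pickle t) ->
  line_ok o E (nth 0 line)) -> nth 0 line 1 = pickle u -> derivation u.
Proof.
move=> [ls1 [size_ls1 ls1_gt0 ok_ls1 concl_ls1]] [ls2 [size_ls2 ls2_gt0 ok_ls2 concl_ls2]].
move=> size_line ok_line; apply: (derivation_snoc (ls := ls1 ++ ls2)) size_line _.
- by rewrite all_cat size_ls1.
- exact: lines_ok_cat.
rewrite size_cat; apply: ok_line; rewrite -?concl_ls1 -?concl_ls2.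
  exact: derived_before_catl (leqnn _) (leq_addr _ _) (derived_before_concl ls1_gt0).
exact: derived_before_catr (leqnn _) (derived_before_concl ls2_gt0).
Qed.

Lemma tfker_derivation u : tfker u -> derivation u.
Proof.
elim=> {u} [|r [j rj]|u v x b [j xj] _ der_uv|u v x b _ der_uxv|u v s _ der_s _ der_uv
  |u v s _ der_s _ der_usv|w z [j zj] z_gt0 _ der_wz|x [j zj] [j' xj']].
- exact: (@derivation_snoc [::] [:: 0; 0; 0; 0; 0; 0; 0; 0]).
- apply: (@derivation_snoc [::] [:: 1; pickle r; j; 0; 0; 0; 0; 0]) => //.
  by rewrite /line_ok /= rj pickle_some.
- apply: (derivation_join der_uv der_uv (line := [:: 2;
    pickle (u ++ [:: (x, b); (x, ~~ b)] ++ v); pickle u; pickle v; x; nat_of_bool b; j; 0]))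
    => // E E_uv _.
  rewrite /line_ok /= xj pickle_some -pickle_pair !catc_pickle E_uv !eqxx andbT.
  by case: (b).
- apply: (derivation_join der_uxv der_uxv (line := [:: 3; pickle (u ++ v); pickle u;
    pickle v; x; nat_of_bool b; 0; 0])) => // E E_uxv _.
  by rewrite /line_ok /= -pickle_pair !catc_pickle E_uxv eqxx andbT; case: (b).
- apply: (derivation_join der_uv der_s (line := [:: 4; pickle (u ++ s ++ v); pickle u;
    pickle v; pickle s; 0; 0; 0])) => // E E_uv E_s.
  by rewrite /line_ok /= !catc_pickle E_uv E_s eqxx.
- apply: (derivation_join der_usv der_s (line := [:: 5; pickle (u ++ v); pickle u;
    pickle v; pickle s; 0; 0; 0])) => // E E_usv E_s.
  by rewrite /line_ok /= !catc_pickle E_usv E_s eqxx.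
- have [sg [k [sg_lt2 zk abs_z]]] :
      exists sg k, [/\ sg < 2, pickle z = int_code sg k & `|z| = k + sg].
    by case: z {zj z_gt0 der_wz} => k; [exists 0, k | exists 1, k]; rewrite ?addn0 ?addn1.
  apply: (derivation_join der_wz der_wz (line := [:: 6; pickle w; sg; k; j; 0; 0; 0]))
    => // E E_wz _.
  by rewrite /line_ok /= sg_lt2 zj pickle_some zk eqxx -abs_z z_gt0 powc_pickle.
- apply: (@derivation_snoc [::] [:: 7; pickle [:: (x, false)]; x; j; j'; 0; 0; 0]) => //.
  by rewrite /line_ok /= zj xj' !pickle_some !eqxx.
Qed.

End Certificates.

Definition cert_of (ls : seq (seq nat)) := CodeSeq.code (size ls :: flatten ls).

Lemma nth_flatten8 ls k f : all (fun l => size l == 8) ls -> k < size ls -> f < 8 ->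
  nth 0 (flatten ls) (k * 8 + f) = line_field ls k f.
Proof.
elim: ls k => [|l ls IH] k //= /andP [/eqP size_l size_ls] lt_k lt_f.
rewrite nth_cat size_l /line_field; case: k lt_k => [|k] lt_k /=; first by rewrite lt_f.
by rewrite mulSn -addnA addKn IH.
Qed.

Section Enumeration.
Variables (eX : nat -> option nat) (eR : nat -> option word) (eA : nat -> option int).
Local Notation o := (input_oracle eX eR eA).
Local Notation tfker := (tfker (enum_set eX) (enum_set eR) (enum_set eA)).

Lemma cert_of_len ls : cert_len (cert_of ls) = size ls.
Proof. by rewrite /cert_len /cert_of CodeSeq.codeK. Qed.

Lemma cert_of_field ls k f : all (fun l => size l == 8) ls -> k < size ls -> f < 8 ->
  cert_field (cert_of ls) k f = line_field ls k f.
Proof. by move=> *; rewrite /cert_field /cert_of CodeSeq.codeK /= nth_flatten8. Qed.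

Lemma cert_of_valid ls : all (fun l => size l == 8) ls -> 0 < size ls ->
  lines_ok eX eR eA ls -> cert_valid o (cert_of ls).
Proof.
move=> size_ls ls_gt0 ok_ls; rewrite /cert_valid cert_of_len ls_gt0.
apply/allP=> k; rewrite mem_iota => /andP [_ lt_k].
rewrite (@line_ok_ext _ _ (derived_before (line_field ls) k) _ (line_field ls k)).
- exact: ok_ls.
- move=> v; apply: eq_in_has => j; rewrite mem_iota => /andP [_ lt_j] /=.
  by rewrite cert_of_field // (ltn_trans lt_j lt_k).
- by move=> f lt_f; rewrite cert_of_field.
Qed.

Definition tf_enum (n : nat) : option word :=
  if cert_valid o n then pickle_inv (cert_concl n) else None.

Lemma tf_enum_peval n : peval o (compile 1 cert_out_e) [:: n] (pickle (tf_enum n)).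
Proof.
have := cert_out_peval o n; rewrite /tf_enum.
case: ifP => [valid_n|_]; last by rewrite mul0n.
have [u <- _] := cert_valid_sound valid_n.
by rewrite pickleK_inv mul1n pickle_some.
Qed.

Lemma tf_enum_tfker w : enum_set tf_enum w <-> tfker w.
Proof.
split=> [[n]|/tfker_derivation [ls [size_ls ls_gt0 ok_ls concl_ls]]].
  rewrite /tf_enum; case: ifP => // /cert_valid_sound [u <- ker_u].
  by rewrite pickleK_inv => -[<-].
exists (cert_of ls); rewrite /tf_enum cert_of_valid // /cert_concl.
rewrite cert_of_len cert_of_field //.
  by rewrite concl_ls pickleK_inv.
by rewrite prednK.
Qed.

End Enumeration.

Theorem proposition2p8 :
  exists P : prog,
  forall (eX : nat -> option nat) (eR : nat -> option word) (eA : nat -> option int),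
    computable (fun n => pickle (eX n)) ->
    computable (fun n => pickle (eR n)) ->
    computable (fun n => pickle (eA n)) ->
    (forall w, enum_set eR w -> onX (enum_set eX) w) ->
    exists eR' : nat -> option word,
      (forall n, peval (input_oracle eX eR eA) P [:: n] (pickle (eR' n))) /\
      (forall w, enum_set eR' w -> onX (enum_set eX) w) /\
      (forall w, enum_set eR w -> enum_set eR' w) /\
      is_univ_A_tf_quotient (enum_set eA)
        (Pres (enum_set eX) (enum_set eR)) (Pres (enum_set eX) (enum_set eR'))
        (fun w : Pres (enum_set eX) (enum_set eR) =>
           (w : Pres (enum_set eX) (enum_set eR'))).
Proof.
(* The program reads the enumerations through its oracles, so it does not need
   their computability. *)
exists (compile 1 cert_out_e) => eX eR eA _ _ _ onX_R.
exists (tf_enum eX eR eA); split; first exact: tf_enum_peval.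
split; first by move=> w /tf_enum_tfker; exact: tfker_onX.
split; first by move=> w Rw; apply/tf_enum_tfker/tfker_rel.
exact: Pres_tfker_univ (tf_enum_tfker eX eR eA).
Qed.
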